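(* Let $X$ be a mild $\mathcal M$-set and $f\in\mathcal M$. Then the map $X\to X$, $x\mapsto f.x$, is injective.
   Context: $\omega=\{1,2,3,\dots\}$, $\mathcal M$ the monoid of injections $\omega\to\omega$; an $\mathcal M$-set is a set with left $\mathcal M$-action. For $A\subset\omega$, $\mathcal M_A$ is the submonoid of injections fixing $A$ elementwise, and $x$ is supported on $A$ if $g.x=x$ for all $g\in\mathcal M_A$. An $\mathcal M$-set $X$ is mild if every $x\in X$ is supported on some co-infinite set $A\subset\omega$ (i.e.\ $\omega\setminus A$ infinite). *)

From Stdlib Require Import Arith.
Set Implicit Arguments.

(* omega = {1,2,3,...}; we index it by nat via n |-> n+1 (an order-preserving
   bijection); all notions below are invariant under this relabelling. *)
Definition omega := nat.

Record Inj := mkInj { inj_fun :> omega -> omega ;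
                      inj_prop : forall a b, inj_fun a = inj_fun b -> a = b }.

Definition inj_id : Inj := @mkInj (fun n => n) (fun a b h => h).
Definition inj_comp (f g : Inj) : Inj.
Proof.
  refine (@mkInj (fun n => f (g n)) _).
  intros a b h. apply (inj_prop g), (inj_prop f), h.
Defined.

Record MSet := {
  carrier :> Type ;
  act : Inj -> carrier -> carrier ;
  act_id : forall x, act inj_id x = x ;
  act_comp : forall (f g : Inj) x, act (inj_comp f g) x = act f (act g x)
}.

Definition fixes (A : omega -> Prop) (g : Inj) : Prop := forall a, A a -> g a = a.

Definition supported_on (X : MSet) (A : omega -> Prop) (x : X) : Prop :=
  forall g : Inj, fixes A g -> act X g x = x.

Definition coinfinite (A : omega -> Prop) : Prop :=
  forall n : omega, exists m, n <= m /\ ~ A m.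

Definition mild (X : MSet) : Prop :=
  forall x : X, exists A : omega -> Prop, coinfinite A /\ supported_on X A x.

From Stdlib Require Import Arith Lia Classical ClassicalEpsilon FunctionalExtensionality ProofIrrelevance.
Set Implicit Arguments.

(* If x and y are supported on A and B with A ∪ B co-infinite, some g ∈ M undoes f
   on A ∪ B (it sends the rest of ω into the infinite complement), so
   x = (g f).x = g.(f.x) = g.(f.y) = (g f).y = y.  Otherwise B \ A is infinite; then
   p := g f fixes B and y = p.x, and transporting the support A of x along p gives a
   support A' of y such that B \ A avoids A ∪ A', which brings us back to the first case. *)

Lemma Inj_ext (f g : Inj) : (forall n, f n = g n) -> f = g.
Proof.
  destruct f as [f hf], g as [g hg]; simpl; intro H.
  assert (f = g) by (apply functional_extensionality; exact H).
  subst g. f_equal. apply proof_irrelevance.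
Qed.

Definition infinite_set (P : omega -> Prop) : Prop :=
  forall n, exists m, n <= m /\ P m.

Lemma infinite_set_split (R P Q : omega -> Prop) :
  infinite_set R -> (forall m, R m -> P m \/ Q m) -> infinite_set P \/ infinite_set Q.
Proof.
  intros HR HPQ.
  destruct (classic (infinite_set Q)) as [HQ | HQ]; [now right | left].
  apply not_all_ex_not in HQ as [N HN].
  intro n. destruct (HR (max n N)) as [m [Hm HRm]].
  exists m. split; [lia |].
  destruct (HPQ m HRm) as [HP | HQm]; [exact HP |].
  exfalso. apply HN. exists m. split; [lia | exact HQm].
Qed.

Lemma infinite_set_embedding (T : omega -> Prop) :
  infinite_set T -> exists e : Inj, forall n, T (e n).
Proof.
  intro HT.
  destruct (choice _ HT) as [pick Hpick].
  set (e := fix e k := match k with 0 => pick 0 | S k => pick (S (e k)) end).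
  assert (He_T : forall k, T (e k)) by (intros [|k]; apply Hpick).
  assert (He_lt : forall i j, i < j -> e i < e j).
  { assert (He_step : forall j, e j < e (S j)) by (intro j; apply (Hpick (S (e j)))).
    intros i j Hij. induction Hij as [| j _ IH]; [apply He_step | specialize (He_step j); lia]. }
  assert (He_inj : forall a b, e a = e b -> a = b).
  { intros a b Hab. destruct (lt_eq_lt_dec a b) as [[H | H] | H];
      [specialize (He_lt _ _ H) | | specialize (He_lt _ _ H)]; lia. }
  now exists (mkInj e He_inj).
Qed.

Lemma left_inverse_on (k : Inj) (S : omega -> Prop) :
  coinfinite S -> exists g : Inj, fixes S (inj_comp g k).
Proof.
  intro HS.
  destruct (@infinite_set_embedding (fun m => ~ S m) HS) as [e He].
  set (G m n := (S n /\ k n = m) \/ ((~ exists a, S a /\ k a = m) /\ n = e m)).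
  destruct (choice G) as [g Hg].
  { intro m. destruct (classic (exists a, S a /\ k a = m)) as [[a Ha] | Hm].
    - exists a. now left.
    - exists (e m). now right. }
  assert (Hg_inj : forall a b, g a = g b -> a = b).
  { intros a b Hab.
    destruct (Hg a) as [[Sa Ha] | [_ Ha]], (Hg b) as [[Sb Hb] | [_ Hb]].
    - congruence.
    - exfalso. apply (He b). now rewrite <- Hb, <- Hab.
    - exfalso. apply (He a). now rewrite <- Ha, Hab.
    - apply (inj_prop e). congruence. }
  exists (mkInj g Hg_inj). intros n Hn. simpl.
  destruct (Hg (k n)) as [[_ Hk] | [Hnot _]].
  - exact (inj_prop k _ _ Hk).
  - exfalso. apply Hnot. now exists n.
Qed.

Lemma supported_on_act_inj (X : MSet) (f : Inj) (A B : omega -> Prop) (x y : X) :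
  supported_on X A x -> supported_on X B y -> coinfinite (fun m => A m \/ B m) ->
  act X f x = act X f y -> x = y.
Proof.
  intros Hx Hy HAB Hf.
  destruct (left_inverse_on f HAB) as [g Hg].
  rewrite <- (Hx (inj_comp g f)), <- (Hy (inj_comp g f)) by (intros a Ha; apply Hg; tauto).
  now rewrite !act_comp, Hf.
Qed.

Definition push_support (p : Inj) (A : omega -> Prop) (m : omega) : Prop :=
  (exists a, A a /\ p a = m) \/ ~ (exists n, p n = m).

Lemma fixes_push_support_range (p g : Inj) (A : omega -> Prop) :
  fixes (push_support p A) g -> forall n, exists n', p n' = g (p n).
Proof.
  intros Hg n. apply NNPP. intro Hout.
  assert (Hgg : g (g (p n)) = g (p n)) by (apply Hg; now right).
  apply inj_prop in Hgg.
  apply Hout. exists n. now rewrite Hgg.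
Qed.

Lemma Inj_factor (p g : Inj) :
  (forall n, exists n', p n' = g (p n)) -> exists s : Inj, forall n, p (s n) = g (p n).
Proof.
  intro Hrange.
  destruct (choice _ Hrange) as [s Hs].
  assert (Hs_inj : forall a b, s a = s b -> a = b).
  { intros a b Hab. apply (inj_prop p), (inj_prop g). rewrite <- !Hs. congruence. }
  now exists (mkInj s Hs_inj).
Qed.

Lemma supported_on_push (X : MSet) (A : omega -> Prop) (x : X) (p : Inj) :
  supported_on X A x -> supported_on X (push_support p A) (act X p x).
Proof.
  intros Hx g Hg.
  destruct (Inj_factor p g (fixes_push_support_range Hg)) as [s Hs].
  assert (HsA : fixes A s).
  { intros a Ha. apply (inj_prop p). rewrite Hs. apply Hg. left. now exists a. }
  assert (Hgp : inj_comp g p = inj_comp p s) by (apply Inj_ext; intro n; simpl; now rewrite Hs).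
  now rewrite <- act_comp, Hgp, act_comp, (Hx s HsA).
Qed.

Lemma push_support_fixed_point (p : Inj) (A : omega -> Prop) (m : omega) :
  p m = m -> ~ A m -> ~ push_support p A m.
Proof.
  intros Hpm HAm [[a [Ha Hpa]] | Hout].
  - rewrite <- Hpm in Hpa. apply inj_prop in Hpa. subst a. contradiction.
  - apply Hout. now exists m.
Qed.

Theorem lemma1p12 (X : MSet) (hX : mild X) (f : Inj) :
  forall x y : X, act X f x = act X f y -> x = y.
Proof.
  intros x y Hf.
  destruct (hX x) as [A [HA Hx]], (hX y) as [B [HB Hy]].
  destruct (infinite_set_split (fun m => B m /\ ~ A m) (fun m => ~ (A m \/ B m)) HA)
    as [HBA | HAB].
  { intros m HAm. tauto. }
  - destruct (left_inverse_on f HB) as [g Hg].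
    set (p := inj_comp g f).
    assert (Hpx : act X p x = y).
    { unfold p. rewrite act_comp, Hf, <- act_comp. apply Hy, Hg. }
    apply (supported_on_act_inj f Hx (B := push_support p A)); [| | exact Hf].
    + rewrite <- Hpx. now apply supported_on_push.
    + intro n. destruct (HBA n) as [m [Hnm [HBm HAm]]].
      exists m. split; [exact Hnm |].
      pose proof (push_support_fixed_point (Hg m HBm) HAm). tauto.
  - exact (supported_on_act_inj f Hx Hy HAB Hf).
Qed.
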